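(* If $(S,K,I)$ is a split graph, then the factor graph $\Phi(S)$ cannot contain an induced path $v_1v_2v_3v_4$ with $\sigma_{23}=1$.
   Context: A split graph $(S,K,I)$ is a graph $S$ together with a fixed partition $V(S)=K\dot\cup I$, where $K$ is a clique and $I$ is an independent set. For a vertex $v_i$ of $S$, $N_i$ denotes its open neighborhood in $S$ and $d_i=|N_i|$; $\eta_{uv}=|N_u\cap N_v|$. The factor graph $\Phi(S)$ is the loopless multigraph with vertex set $I$ in which, for distinct $u,v\in I$, there is one edge joining $u$ and $v$ for each 2-switch of $S$ acting on $u$ and $v$ (a 2-switch replaces edges $ab,cd$ with $ac,bd$ when $ab,cd\in E(S)$ and $ac,bd\notin E(S)$); equivalently, the multiplicity of $uv$ is $\sigma_{uv}=(d_u-\eta_{uv})(d_v-\eta_{uv})$, and $u,v$ are adjacent iff $\sigma_{uv}>0$; $\sigma_{ij}$ denotes $\sigma_{v_iv_j}$. An induced path in $\Phi(S)$ consists of distinct vertices with consecutive ones adjacent and no other pair adjacent (multiplicities ignored). *)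

From mathcomp Require Import all_boot.
Set Implicit Arguments. Unset Strict Implicit. Unset Printing Implicit Defensive.

Definition simple_graph (T : finType) (e : rel T) : Prop :=
  symmetric e /\ irreflexive e.

Definition split_graph (T : finType) (e : rel T) (K I : {set T}) : Prop :=
  [/\ simple_graph e,
      K :&: I = set0,
      K :|: I = setT,
      {in K &, forall x y, x != y -> e x y}
    & {in I &, forall x y, ~~ e x y}].

Section FactorGraph.
Variables (T : finType) (e : rel T).

Definition nbhd (v : T) : {set T} := [set w | e v w].
Definition deg (v : T) : nat := #|nbhd v|.
Definition eta (u v : T) : nat := #|nbhd u :&: nbhd v|.

(* multiplicity of the edge uv in the factor graph Phi(S) *)
Definition sigma (u v : T) : nat := (deg u - eta u v) * (deg v - eta u v).

Definition phi_adj (I : {set T}) (u v : T) : bool :=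
  [&& u \in I, v \in I, u != v & 0 < sigma u v].

Definition phi_induced_P4 (I : {set T}) (v1 v2 v3 v4 : T) : Prop :=
  [/\ [&& v1 \in I, v2 \in I, v3 \in I & v4 \in I],
      uniq [:: v1; v2; v3; v4],
      [&& phi_adj I v1 v2, phi_adj I v2 v3 & phi_adj I v3 v4]
    & [&& ~~ phi_adj I v1 v3, ~~ phi_adj I v1 v4 & ~~ phi_adj I v2 v4]].

End FactorGraph.

From mathcomp Require Import all_boot.
Set Implicit Arguments.
Unset Strict Implicit.
Unset Printing Implicit Defensive.

(* Since sigma u v = |N_u \ N_v| * |N_v \ N_u|, two vertices are adjacent in
   the factor graph exactly when their neighbourhoods are incomparable, and
   sigma_23 = 1 means N_2 and N_3 differ by a single swap a in N_2, b in N_3.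
   A neighbourhood comparable with N_3 but not with N_2 must then contain b and
   miss a; so N_1 contains b and misses a while, symmetrically, N_4 contains a
   and misses b.  Hence N_1 and N_4 are incomparable, i.e. v_1 v_4 is an edge. *)

Definition nested (T : finType) (A B : {set T}) : bool :=
  (A \subset B) || (B \subset A).

Lemma nestedC (T : finType) (A B : {set T}) : nested A B = nested B A.
Proof. exact: orbC. Qed.

Lemma nested_swap (T : finType) (A B C : {set T}) (a b : T) :
  A :\: B = [set a] -> B :\: A = [set b] ->
  nested C B -> ~~ nested C A -> (b \in C) && (a \notin C).
Proof.
move=> AB BA /orP[CB | BC]; rewrite negb_or => /andP[CA AC].
- have [x xC xA] := subsetPn CA.
  have : x \in B :\: A by rewrite inE xA (subsetP CB).
  rewrite BA inE => /eqP <-; rewrite xC /=.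
  have : a \in A :\: B by rewrite AB set11.
  by rewrite inE => /andP[aB _]; apply: contra aB; apply: (subsetP CB).
- have [x xA xC] := subsetPn AC.
  have : x \in A :\: B by rewrite inE xA andbT; apply: contra xC; apply: (subsetP BC).
  rewrite AB inE => /eqP <-; rewrite xC andbT.
  have : b \in B :\: A by rewrite BA set11.
  by rewrite inE => /andP[_ /(subsetP BC)].
Qed.

Section FactorGraph.
Variables (T : finType) (e : rel T).

Lemma sigmaE (u v : T) :
  sigma e u v = #|nbhd e u :\: nbhd e v| * #|nbhd e v :\: nbhd e u|.
Proof.
rewrite /sigma /deg /eta -{1}(cardsID (nbhd e v) (nbhd e u)) addKn.
by rewrite setIC -{1}(cardsID (nbhd e u) (nbhd e v)) addKn.
Qed.

Lemma phi_adjE (I : {set T}) (u v : T) :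
  phi_adj e I u v = [&& u \in I, v \in I, u != v & ~~ nested (nbhd e u) (nbhd e v)].
Proof.
by rewrite /phi_adj sigmaE lt0n muln_eq0 !cards_eq0 !setD_eq0.
Qed.

Lemma sigma_eq1P (u v : T) :
  sigma e u v = 1 ->
  exists a b, nbhd e u :\: nbhd e v = [set a] /\ nbhd e v :\: nbhd e u = [set b].
Proof.
rewrite sigmaE => /eqP; rewrite muln_eq1 => /andP[/cards1P[a Ea] /cards1P[b Eb]].
by exists a, b.
Qed.

Lemma phi_induced_P4_nested (I : {set T}) (v1 v2 v3 v4 : T) :
  phi_induced_P4 e I v1 v2 v3 v4 ->
  [/\ ~~ nested (nbhd e v1) (nbhd e v2), ~~ nested (nbhd e v3) (nbhd e v4),
      nested (nbhd e v1) (nbhd e v3), nested (nbhd e v1) (nbhd e v4)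
    & nested (nbhd e v2) (nbhd e v4)].
Proof.
move=> [/and4P[i1 i2 i3 i4] uniq_v /and3P[a12 _ a34] /and3P[n13 n14 n24]].
rewrite /= !inE !negb_or in uniq_v.
case/and4P: uniq_v => /and3P[d12 d13 d14] /andP[_ d24] d34 _.
move: a12 a34 n13 n14 n24; rewrite !phi_adjE i1 i2 i3 i4 d12 d13 d14 d24 d34 /=.
by rewrite !negbK.
Qed.

End FactorGraph.

Theorem theorem4p1 (T : finType) (e : rel T) (K I : {set T}) :
  split_graph e K I ->
  ~ (exists v1 v2 v3 v4 : T,
       phi_induced_P4 e I v1 v2 v3 v4 /\ sigma e v2 v3 = 1).
Proof.
move=> _ [v1 [v2 [v3 [v4 [P4 /sigma_eq1P[a [b [E23 E32]]]]]]]].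
have [n12 n34 c13 c14 c24] := phi_induced_P4_nested P4.
have /andP[b1 a1] := nested_swap E23 E32 c13 n12.
rewrite nestedC in c24; rewrite nestedC in n34.
have /andP[a4 b4] := nested_swap E32 E23 c24 n34.
case/orP: c14 => [/subsetP sub14 | /subsetP sub41].
- by rewrite sub14 in b4.
- by rewrite sub41 in a1.
Qed.
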